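(* Let $1\le i\le r$, $(\ell^+,\mathbf s^+)\in\mathbf F_+$ and $(\ell,\mathbf s)\in\mathbf F$. Then $\mathrm{pr}\big(\mathbf x^+_{i,r}(\ell^+,\mathbf s^+)\,\mathbf x^-_{i,r}(\ell,\mathbf s)\big)$ is a linear combination of elements $\mathbf x^-_{i,r}(\ell-\ell^+,\mathbf s')$ with $(\ell-\ell^+,\mathbf s')\in\mathbf F$ and $|\mathbf s'|=|\mathbf s|+|\mathbf s^+|$ (in particular it is $0$ if $\ell^+>\ell$).
   Context: $\mathfrak g=\mathfrak{sl}_{r+1}(\mathbb C)$, $\mathfrak h$ diagonal, $x^+_{i,j}=E_{i,j+1}$, $x^-_{i,j}=E_{j+1,i}$, $\mathfrak n^\pm=\bigoplus\mathbb Cx^\pm_{i,j}$, $\mathfrak b^+=\mathfrak h\oplus\mathfrak n^+$, $\mathfrak a[t]=\mathfrak a\otimes\mathbb C[t]$. $\mathrm{pr}:U(\mathfrak g[t])\to U(\mathfrak n^-[t])$ is the projection along $U(\mathfrak g[t])\mathfrak b^+[t]$ in $U(\mathfrak g[t])=U(\mathfrak n^-[t])\oplus U(\mathfrak g[t])\mathfrak b^+[t]$. $\mathbf F$: pairs $(\ell,\mathbf s)$, $\ell\in\mathbb N$, $\mathbf s=(\mathbf s(1)\le\dots\le\mathbf s(\ell))\in\mathbb N^\ell$, $|\mathbf s|=\sum_p\mathbf s(p)$; $\mathbf F_+\subset\mathbf F$: $(0,\emptyset)$ and pairs with all $\mathbf s(p)>0$. $\mathbf x^\pm_{i,j}(\ell,\mathbf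 s)=\prod_{p=1}^\ell(x^\pm_{i,j}\otimes t^{\mathbf s(p)})$ (equal to $1$ if $\ell=0$). *)

From HB Require Import structures.
From mathcomp Require Import all_boot all_order all_algebra.
From mathcomp Require Import reals.
From mathcomp Require Import complex.
From mathcomp.multinomials Require Import monalg.

Set Implicit Arguments.
Unset Strict Implicit.
Unset Printing Implicit Defensive.

Import Order.TTheory GRing.Theory Num.Theory.
Local Open Scope ring_scope.

Definition word (G : choiceType) := seq G.
HB.instance Definition _ (G : choiceType) := Choice.on (word G).

Lemma word_unitm (G : choiceType) (x y : word G) :
  x ++ y = [::] -> x = [::] /\ y = [::].
Proof. by case: x => //; case: y. Qed.

HB.instance Definition _ (G : choiceType) :=
  Choice_isMonomialDef.Build (word G) (@catA G) (@cat0s G) (@cats0 G)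
    (@word_unitm G).

Section Current.
Variable R : realType.
Local Notation C := (R[i])%C.
Variable r : nat.

Definition slmx := {M : 'M[C]_(r.+1) | \tr M == 0}.

(* generators of g[t] (as a set): x (x) t^k, x in sl_{r+1}, k in N *)
Definition gen_t := (slmx * nat)%type.

(* Free associative C-algebra on the set g x N *)
Definition FA := {malg C[word gen_t]}.

Definition ge (M : slmx) (k : nat) : FA := << ([:: (M, k)] : word gen_t) >>.

(* Two-sided ideal J of the defining relations of U(g[t]):
   linearity in x and [x (x) t^k, y (x) t^l] = [x,y] (x) t^(k+l).
   U(g[t]) = FA / J. *)
Inductive relJ : FA -> Prop :=
| J_lin (a : C) (M N P : slmx) (k : nat) :
    val P = a *: val M + val N -> relJ (ge P k - (a *: ge M k + ge N k))
| J_br (M N P : slmx) (k l : nat) :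
    val P = val M *m val N - val N *m val M ->
    relJ (ge M k * ge N l - ge N l * ge M k - ge P (k + l))
| J_add X Y : relJ X -> relJ Y -> relJ (X + Y)
| J_scale (c : C) X : relJ X -> relJ (c *: X)
| J_mull A X : relJ X -> relJ (A * X)
| J_mulr A X : relJ X -> relJ (X * A).

Definition in_bplus (M : slmx) : bool :=
  [forall i : 'I_r.+1, forall j : 'I_r.+1, (j < i)%N ==> (val M i j == 0)].
Definition in_nminus (M : slmx) : bool :=
  [forall i : 'I_r.+1, forall j : 'I_r.+1, (i <= j)%N ==> (val M i j == 0)].

Inductive leftB : FA -> Prop :=
| LB0 : leftB 0
| LBgen A (M : slmx) (k : nat) X :
    in_bplus M -> leftB X -> leftB (A * ge M k + X).

(* preimage in FA of the left ideal U(g[t]) b^+[t] of U(g[t]) *)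
Definition in_UgBplus (X : FA) : Prop :=
  exists Y Z, relJ Y /\ leftB Z /\ X = Y + Z.

Inductive nminus_span : FA -> Prop :=
| NS0 : nminus_span 0
| NSw (c : C) (w : seq gen_t) X :
    all (fun g => in_nminus g.1) w -> nminus_span X ->
    nminus_span (c *: \prod_(g <- w) ge g.1 g.2 + X).

(* preimage in FA of the subalgebra U(n^-[t]) of U(g[t]) *)
Definition in_Unminus (X : FA) : Prop :=
  exists Y Z, relJ Y /\ nminus_span Z /\ X = Y + Z.

(* [is_pr X Z] : pr(X) = Z in U(g[t]), where
   pr : U(g[t]) = U(n^-[t]) (+) U(g[t]) b^+[t] -> U(n^-[t]) is the projection;
   i.e. Z lies in U(n^-[t]) and X - Z lies in U(g[t]) b^+[t]. *)
Definition is_pr (X Z : FA) : Prop := in_Unminus Z /\ in_UgBplus (X - Z).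

Lemma tr_delta_neq (a b : 'I_r.+1) : a != b -> \tr (delta_mx a b : 'M[C]_r.+1) == 0.
Proof.
move=> ab; apply/eqP; rewrite /mxtrace.
apply: big1 => k _; rewrite mxE.
case: (k =P a) => [->|] //=; by rewrite (negbTE ab).
Qed.

(* For i : 'I_r (0-based, i.e. paper's index i+1 in 1..r) *)
Definition idx (i : 'I_r) : 'I_r.+1 := widen_ord (leqnSn r) i.

Lemma idx_neq_max (i : 'I_r) : idx i != ord_max.
Proof. by rewrite -val_eqE /= neq_ltn ltn_ord. Qed.

Lemma max_neq_idx (i : 'I_r) : ord_max != idx i.
Proof. by rewrite eq_sym idx_neq_max. Qed.

Definition xplus (i : 'I_r) : slmx :=
  exist _ (delta_mx (idx i) ord_max) (tr_delta_neq (idx_neq_max i)).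
Definition xminus (i : 'I_r) : slmx :=
  exist _ (delta_mx ord_max (idx i)) (tr_delta_neq (max_neq_idx i)).

(* F : pairs (l, s) with s nondecreasing of length l; encoded by s : seq nat *)
Definition inF (s : seq nat) : bool := sorted leq s.
Definition inFplus (s : seq nat) : bool := sorted leq s && all (fun a => 0 < a)%N s.

Definition bx (M : slmx) (s : seq nat) : FA := \prod_(a <- s) ge M a.

End Current.

From HB Require Import structures.
From mathcomp Require Import all_boot all_order all_algebra.
From mathcomp Require Import reals complex.
From mathcomp.multinomials Require Import monalg.
From mathcomp Require Import finmap zify.

Set Implicit Arguments.
Unset Strict Implicit.
Unset Printing Implicit Defensive.

Import GRing.Theory.
Local Open Scope ring_scope.

(* In U(g[t]) one has [x^+ t^a, x^- t^b] = h t^(a+b) and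
   [h t^c, x^- t^b] = -2 x^- t^(b+c), where h = E_ii - E_(r+1)(r+1), while
   x^+ t^a and h t^c lie in b^+[t] and so vanish on the right modulo
   U(g[t]) b^+[t].  Pushing the leftmost x^+ t^a to the right through a
   monomial x^- t^(b_1) ... x^- t^(b_l) therefore leaves a combination of
   monomials in x^- with one factor fewer and total degree increased by a;
   iterating over the factors of x^+(l^+, s^+) and finally sorting the
   exponents (the x^- t^b commute) gives the proposition. *)

Lemma malg_scalerAr (R : comNzRingType) (K : monomType) (c : R)
    (x y : {malg R[K]}) :
  x * (c *: y) = c *: (x * y).
Proof.
apply/malgP=> k; rewrite mcoeffZ.
rewrite (mcoeffMlw _ (fsubset_refl (msupp x)) (msuppZ_le c y)).
rewrite mcoeffMl mulr_sumr; apply: eq_bigr => k1 _.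
rewrite mulr_sumr; apply: eq_bigr => k2 _.
by rewrite mcoeffZ mulrCA mulrnAr.
Qed.

Section CommutatorIdentities.
Variable V : pzRingType.
Implicit Types a b d s t : V.

Lemma commutatorMr a b t :
  a * (b * t) - b * t * a = (a * b - b * a) * t + b * (a * t - t * a).
Proof. by rewrite mulrBl mulrBr !mulrA addrA subrK. Qed.

Lemma mulr_swap_defect a b d t :
  a * (b * t) - (b * (a * t) + d * t) = (a * b - b * a - d) * t.
Proof. by rewrite !mulrBl !mulrA opprD addrA. Qed.

Lemma mulr_swap_sub a b s t :
  a * s - b * (a * t) = a * (s - b * t) + (a * b - b * a) * t.
Proof. by rewrite mulrBr mulrBl !mulrA addrA subrK. Qed.

End CommutatorIdentities.

Section Relations.
Variables (R : realType) (r : nat).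
Local Notation FA := (FA R r).
Local Notation slmx := (slmx R r).
Implicit Types (X Y : FA) (M N P : slmx).

Lemma tr_lie (A B : 'M[complex R]_r.+1) : \tr (A *m B - B *m A) == 0.
Proof. by rewrite raddfB /= mxtrace_mulC subrr. Qed.

Definition slmx_lie M N : slmx :=
  exist (fun A => \tr A == 0) _ (tr_lie (val M) (val N)).

Definition slmx0 : slmx :=
  exist (fun A => \tr A == 0) 0 (introT eqP (mxtrace0 _ _)).

Lemma relJ_ge0 M k : val M = 0 -> relJ (ge M k).
Proof.
move=> M0; have M1 : val M = 1 *: val M + val M by rewrite M0 scaler0 addr0.
have := J_scale (-1) (J_lin k M1).
by rewrite scale1r opprD addrA subrr sub0r scaleN1r opprK.
Qed.

Lemma relJ0 : relJ (0 : FA).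
Proof. by have := J_scale 0 (@relJ_ge0 slmx0 0 erefl); rewrite scale0r. Qed.

Lemma relJ_lie M N k l :
  relJ (ge M k * ge N l - ge N l * ge M k - ge (slmx_lie M N) (k + l)).
Proof. exact: J_br. Qed.

Lemma relJ_geZ (a : complex R) M P k :
  val P = a *: val M -> relJ (ge P k - a *: ge M k).
Proof.
move=> PaM; have PaM0 : val P = a *: val M + val slmx0 by rewrite addr0.
have := J_add (J_lin k PaM0) (@relJ_ge0 slmx0 k erefl).
by rewrite opprD addrA subrK.
Qed.

Lemma relJ_ge_comm M k l : relJ (ge M k * ge M l - ge M l * ge M k).
Proof.
have := J_add (relJ_lie M M k l) (@relJ_ge0 (slmx_lie M M) (k + l) (subrr _)).
by rewrite subrK.
Qed.

Lemma bx_nil M : bx M [::] = 1.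
Proof. by rewrite /bx big_nil. Qed.

Lemma bx_cons M a s : bx M (a :: s) = ge M a * bx M s.
Proof. by rewrite /bx big_cons. Qed.

Lemma bx_cat M s t : bx M (s ++ t) = bx M s * bx M t.
Proof. by rewrite /bx big_cat. Qed.

Lemma relJ_ge_bx_comm M a t : relJ (ge M a * bx M t - bx M t * ge M a).
Proof.
elim: t => [|b t IHt].
  (* Generalizing [ge M a] keeps [rewrite] from comparing [ge M a * 1] with
     [1 * ge M a] by unfolding the product of the monoid algebra. *)
  by rewrite bx_nil; move: (ge M a) => g; rewrite mulr1 mul1r subrr; apply: relJ0.
rewrite bx_cons commutatorMr.
by apply: J_add; [apply: J_mulr; apply: relJ_ge_comm | apply: J_mull].
Qed.

Lemma relJ_bx_perm M s t : perm_eq s t -> relJ (bx M s - bx M t).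
Proof.
elim: s t => [|a s IHs] t.
  by rewrite perm_sym => /perm_nilP ->; rewrite subrr; apply: relJ0.
move=> st; have ta : a \in t by rewrite -(perm_mem st) mem_head.
move: st; case/splitPr: ta => t1 t2 st.
have {}st : perm_eq s (t1 ++ t2).
  by rewrite -(perm_cons a); apply: (perm_trans st); rewrite -cat1s perm_catCA.
rewrite bx_cons bx_cat bx_cons mulr_swap_sub -bx_cat.
by apply: J_add; [apply: J_mull; apply: IHs | apply: J_mulr; apply: relJ_ge_bx_comm].
Qed.

Lemma relJ_bx_sort M (cs : seq (complex R * seq nat)) :
  relJ (\sum_(q <- cs) q.1 *: bx M q.2 - \sum_(q <- cs) q.1 *: bx M (sort leq q.2)).
Proof.
rewrite -sumrB; apply: big_ind => [|X Y|q _]; [exact: relJ0 | exact: J_add |].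
by rewrite -scalerBr; apply/J_scale/relJ_bx_perm; rewrite perm_sym perm_sort.
Qed.

Lemma Unminus_bx_sum M (cs : seq (complex R * seq nat)) :
  in_nminus M -> in_Unminus (\sum_(q <- cs) q.1 *: bx M q.2).
Proof.
move=> nM; exists 0, (\sum_(q <- cs) q.1 *: bx M q.2).
split; [exact: relJ0 | split; last by rewrite add0r].
elim: cs => [|q cs IHcs]; first by rewrite big_nil; apply: NS0.
rewrite big_cons (_ : bx M q.2 = \prod_(g <- [seq (M, a) | a <- q.2]) ge g.1 g.2).
  by apply: NSw => //; apply/allP => g /mapP [a _ ->].
by rewrite big_map.
Qed.

Lemma leftB_add X Y : leftB X -> leftB Y -> leftB (X + Y).
Proof.
elim=> [|A M k X' bM _ IH] BY; first by rewrite add0r.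
by rewrite -addrA; apply: LBgen => //; apply: IH.
Qed.

Lemma leftB_scale (c : complex R) X : leftB X -> leftB (c *: X).
Proof.
elim=> [|A M k X' bM _ IH]; first by rewrite scaler0; apply: LB0.
by rewrite scalerDr scalerAl; apply: LBgen.
Qed.

Lemma leftB_mull Y X : leftB X -> leftB (Y * X).
Proof.
elim=> [|A M k X' bM _ IH]; first by rewrite mulr0; apply: LB0.
by rewrite mulrDr mulrA; apply: LBgen.
Qed.

Local Notation UgB := (@in_UgBplus R r).

Lemma UgBplus_relJ X : relJ X -> UgB X.
Proof. by move=> JX; exists X, 0; split=> //; split; [exact: LB0 | rewrite addr0]. Qed.

Lemma UgBplus_add X Y : UgB X -> UgB Y -> UgB (X + Y).
Proof.
move=> [X1 [X2 [JX1 [BX2 ->]]]] [Y1 [Y2 [JY1 [BY2 ->]]]].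
exists (X1 + Y1), (X2 + Y2); split; first exact: J_add.
by split; [apply: leftB_add | rewrite addrACA].
Qed.

Lemma UgBplus_scale (c : complex R) X : UgB X -> UgB (c *: X).
Proof.
move=> [X1 [X2 [JX1 [BX2 ->]]]]; exists (c *: X1), (c *: X2).
by split; [apply: J_scale | split; [apply: leftB_scale | rewrite scalerDr]].
Qed.

Lemma UgBplus_mull Y X : UgB X -> UgB (Y * X).
Proof.
move=> [X1 [X2 [JX1 [BX2 ->]]]]; exists (Y * X1), (Y * X2).
by split; [apply: J_mull | split; [apply: leftB_mull | rewrite mulrDr]].
Qed.

Lemma UgBplus_bplus X M k : in_bplus M -> UgB (X * ge M k).
Proof.
move=> bM; exists 0, (X * ge M k + 0); split; first exact: relJ0.
by split; [apply: LBgen => //; apply: LB0 | rewrite add0r addr0].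
Qed.

End Relations.

Section Combinations.
Variables (R : realType) (r : nat) (M : slmx R r).
Local Notation FA := (FA R r).
Local Notation UgB := (@in_UgBplus R r).
Implicit Types X Y : FA.

(* [k] counts the factors of [M] used up: the monomials have length [n - k]. *)
Definition bx_comb X k n m :=
  exists cs : seq (complex R * seq nat),
    (forall q, q \in cs -> (size q.2 + k = n)%N /\ sumn q.2 = m) /\
    UgB (X - \sum_(q <- cs) q.1 *: bx M q.2).

Lemma bx_comb_UgBplus X k n m : UgB X -> bx_comb X k n m.
Proof. by move=> BX; exists [::]; rewrite big_nil subr0. Qed.

Lemma bx_comb_congr X Y k n m : UgB (X - Y) -> bx_comb Y k n m -> bx_comb X k n m.
Proof.
move=> BXY [cs [cs_deg BY]]; exists cs; split=> //.
by have := UgBplus_add BXY BY; rewrite addrA subrK.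
Qed.

Lemma bx_comb_add X Y k n m :
  bx_comb X k n m -> bx_comb Y k n m -> bx_comb (X + Y) k n m.
Proof.
move=> [cs1 [deg1 B1]] [cs2 [deg2 B2]]; exists (cs1 ++ cs2); split.
  by move=> q; rewrite mem_cat => /orP [/deg1|/deg2].
by rewrite big_cat opprD addrACA; apply: UgBplus_add.
Qed.

Lemma bx_comb_scale (c : complex R) X k n m :
  bx_comb X k n m -> bx_comb (c *: X) k n m.
Proof.
move=> [cs [deg BX]]; exists [seq (c * q.1, q.2) | q <- cs]; split.
  by move=> _ /mapP [q /deg ? ->].
rewrite big_map (eq_bigr (fun q => c *: (q.1 *: bx M q.2))); last first.
  by move=> q _; rewrite scalerA.
by rewrite -scaler_sumr -scalerBr; apply: UgBplus_scale.
Qed.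

Lemma bx_comb_sum (cs : seq (complex R * seq nat)) (F : complex R * seq nat -> FA) k n m :
  (forall q, q \in cs -> bx_comb (F q) k n m) -> bx_comb (\sum_(q <- cs) F q) k n m.
Proof.
elim: cs => [|q cs IHcs] combF.
  by rewrite big_nil; apply/bx_comb_UgBplus/UgBplus_relJ/relJ0.
rewrite big_cons; apply: bx_comb_add; first by apply: combF; rewrite mem_head.
by apply: IHcs => q' q'cs; apply: combF; rewrite inE q'cs orbT.
Qed.

Lemma bx_comb_mulge b X k n m :
  bx_comb X k n m -> bx_comb (ge M b * X) k n.+1 (b + m).
Proof.
move=> [cs [deg BX]]; exists [seq (q.1, b :: q.2) | q <- cs]; split.
  by move=> _ /mapP [q /deg [size_q sum_q] ->]; rewrite /= addSn size_q sum_q.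
rewrite big_map (eq_bigr (fun q => ge M b * (q.1 *: bx M q.2))); last first.
  by move=> q _; rewrite bx_cons malg_scalerAr.
by rewrite -mulr_sumr -mulrBr; apply: UgBplus_mull.
Qed.

Lemma bx_comb_shift j X k n m : bx_comb X k n m -> bx_comb X (k + j) (n + j) m.
Proof. by move=> [cs [deg BX]]; exists cs; split=> // q /deg [<- ->]; rewrite addnA. Qed.

Lemma bx_comb_bx q : bx_comb (bx M q) 0 (size q) (sumn q).
Proof.
exists [:: (1, q)]; split; first by move=> _ /[1!inE] /eqP ->; rewrite addn0.
by rewrite big_seq1 scale1r subrr; apply/UgBplus_relJ/relJ0.
Qed.

End Combinations.

Section RaisingThroughLowering.
Variables (R : realType) (r : nat) (i : 'I_r).
Local Notation xp := (xplus R i).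
Local Notation xm := (xminus R i).
Local Notation bx_comb := (bx_comb xm).

Definition hcoroot := slmx_lie xp xm.

Lemma hcorootE : val hcoroot = delta_mx (idx i) (idx i) - delta_mx ord_max ord_max.
Proof. by rewrite /= !mul_delta_mx. Qed.

Lemma lower_index_neq (x y a b : 'I_r.+1) :
  (x <= y)%N -> (b < a)%N -> ((a == x) && (b == y)) = false.
Proof.
move=> xy ba; apply/negP => /andP [/eqP ax /eqP by_]; subst.
by move: (leq_trans ba xy); rewrite ltnn.
Qed.

Lemma bplus_xplus : in_bplus xp.
Proof.
apply/forallP => a; apply/forallP => b; apply/implyP => ba.
by rewrite /= mxE lower_index_neq //= ltnW.
Qed.

Lemma bplus_hcoroot : in_bplus hcoroot.
Proof.
apply/forallP => a; apply/forallP => b; apply/implyP => ba.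
by rewrite hcorootE !mxE !lower_index_neq //= subrr.
Qed.

Lemma nminus_xminus : in_nminus xm.
Proof.
apply/forallP => a; apply/forallP => b; apply/implyP => ab.
rewrite /= mxE; apply/eqP; case: eqP => [am|] //=; case: eqP => [bi|] //=; subst.
by move: ab; rewrite leqNgt /= ltn_ord.
Qed.

Lemma lie_hcoroot_xminus : val (slmx_lie hcoroot xm) = (-2) *: val xm.
Proof.
rewrite /= !mul_delta_mx mulmxBl mulmxBr !mul_delta_mx.
rewrite !mul_delta_mx_0 ?max_neq_idx ?idx_neq_max //.
by rewrite sub0r subr0 scaleNr -opprD scaler_nat mulr2n.
Qed.

Lemma relJ_hcoroot_xminus c b :
  relJ (ge hcoroot c * ge xm b - ge xm b * ge hcoroot c - (-2) *: ge xm (c + b)).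
Proof.
have := J_add (relJ_lie hcoroot xm c b) (relJ_geZ (c + b) lie_hcoroot_xminus).
by rewrite addrA subrK.
Qed.

Lemma bx_comb_hcoroot_bx c s :
  bx_comb (ge hcoroot c * bx xm s) 0 (size s) (sumn s + c).
Proof.
elim: s c => [|b s IHs] c.
  apply: bx_comb_UgBplus; rewrite bx_nil mulr1 -[ge _ c]mul1r.
  exact/UgBplus_bplus/bplus_hcoroot.
rewrite bx_cons; apply: (@bx_comb_congr _ _ _ _
  (ge xm b * (ge hcoroot c * bx xm s) + (-2) *: (ge xm (c + b) * bx xm s))).
  rewrite scalerAl mulr_swap_defect.
  exact/UgBplus_relJ/J_mulr/relJ_hcoroot_xminus.
apply: bx_comb_add; first by rewrite /= -addnA; apply: bx_comb_mulge.
apply: bx_comb_scale; rewrite -bx_cons.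
have -> : (sumn (b :: s) + c = sumn ((c + b) :: s))%N by rewrite /=; lia.
exact: bx_comb_bx.
Qed.

Lemma bx_comb_xplus_bx a s :
  bx_comb (ge xp a * bx xm s) 1 (size s) (sumn s + a).
Proof.
elim: s a => [|b s IHs] a.
  apply: bx_comb_UgBplus; rewrite bx_nil mulr1 -[ge _ a]mul1r.
  exact/UgBplus_bplus/bplus_xplus.
rewrite bx_cons; apply: (@bx_comb_congr _ _ _ _
  (ge xm b * (ge xp a * bx xm s) + ge hcoroot (a + b) * bx xm s)).
  rewrite mulr_swap_defect; exact/UgBplus_relJ/J_mulr/J_br.
apply: bx_comb_add; first by rewrite /= -addnA; apply: bx_comb_mulge.
have -> : (size (b :: s) = size s + 1)%N by rewrite addn1.
have -> : (sumn (b :: s) + a = sumn s + (a + b))%N by rewrite /=; lia.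
exact: bx_comb_shift (bx_comb_hcoroot_bx _ _).
Qed.

Lemma bx_comb_mulxplus a X k n m :
  bx_comb X k n m -> bx_comb (ge xp a * X) k.+1 n (m + a).
Proof.
move=> [cs [deg BX]].
apply: (bx_comb_congr (Y := ge xp a * \sum_(q <- cs) q.1 *: bx xm q.2)).
  by rewrite -mulrBr; apply: UgBplus_mull.
rewrite mulr_sumr; apply: bx_comb_sum => q /deg [size_q <-].
rewrite malg_scalerAr; apply: bx_comb_scale; rewrite -size_q.
exact: bx_comb_shift (bx_comb_xplus_bx _ _).
Qed.

Lemma bx_comb_bxplus_bx sp s :
  bx_comb (bx xp sp * bx xm s) (size sp) (size s) (sumn s + sumn sp).
Proof.
elim: sp => [|a sp IHsp]; first by rewrite bx_nil mul1r addn0; apply: bx_comb_bx.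
rewrite bx_cons -mulrA.
have -> : (sumn s + sumn (a :: sp) = sumn s + sumn sp + a)%N by rewrite /=; lia.
exact: bx_comb_mulxplus.
Qed.

End RaisingThroughLowering.

Theorem proposition3p1 (R : realType) (r : nat) (i : 'I_r)
    (sp s : seq nat) :
  inFplus sp -> inF s ->
  exists cs : seq (complex R * seq nat),
    (forall q, q \in cs ->
       [/\ inF q.2, (size q.2 + size sp)%N = size s
         & sumn q.2 = (sumn s + sumn sp)%N]) /\
    is_pr (bx (xplus R i) sp * bx (xminus R i) s)
          (\sum_(q <- cs) q.1 *: bx (xminus R i) q.2).
Proof.
move=> _ _; have [cs [deg Bcs]] := @bx_comb_bxplus_bx R r i sp s.
exists [seq (q.1, sort leq q.2) | q <- cs]; split.
  move=> _ /mapP [q /deg [size_q sum_q] ->] /=; split.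
  - exact: (sort_sorted leq_total).
  - by rewrite size_sort size_q.
  - by rewrite (perm_sumn (permEl (perm_sort leq _))) sum_q.
split; first exact/Unminus_bx_sum/nminus_xminus.
have := UgBplus_add Bcs (UgBplus_relJ (relJ_bx_sort (xminus R i) cs)).
by rewrite big_map addrA subrK.
Qed.
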